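(* Let $\alpha\ge0$, $\mu\ge0$. For every $h\in C_B^2[0,\infty)$, every $n\in\mathbb{N}$ and every $x\in[0,\infty)$, $$|T_n(h;x)-h(x)|\le(\Delta_1+\Delta_2)\|h\|_{C_B^2[0,\infty)},$$ where $\Delta_1=\dfrac{2\alpha x^2}{n}$ and $\Delta_2=\dfrac{1}{n^2}x\left(4x^3\alpha^2+4\alpha x+n\right)+\dfrac{2\mu x}{n}\dfrac{e_\mu(-nx)}{e_\mu(nx)}$.
   Context: $C_B[0,\infty)$ denotes the space of uniformly continuous bounded functions on $[0,\infty)$ with the sup norm $\|\cdot\|_{C_B[0,\infty)}$; $C_B^2[0,\infty)=\{g\in C_B[0,\infty): g',g''\in C_B[0,\infty)\}$ with norm $\|g\|_{C_B^2[0,\infty)}=\|g\|_{C_B}+\|g'\|_{C_B}+\|g''\|_{C_B}$. For $\mu>-\tfrac12$ define $\gamma_\mu(2k)=\dfrac{2^{2k}k!\,\Gamma(k+\mu+1/2)}{\Gamma(\mu+1/2)}$ and $\gamma_\mu(2k+1)=\dfrac{2^{2k+1}k!\,\Gamma(k+\mu+3/2)}{\Gamma(\mu+1/2)}$, $k\ge0$; $e_\mu(x)=\sum_{k\ge0} x^k/\gamma_\mu(k)$; $\theta_k=0$ if $k$ is even and $\theta_k=1$ if $k$ is odd. Let $h_k^\mu(\xi,\alpha)=\gamma_\mu(k)\sum_{j=0}^{\lfloor k/2\rfloor}\dfrac{\alpha^j\xi^{k-2j}}{j!\,\gamma_\mu(k-2j)}$. For $\alpha\ge0,\mu\ge0$,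 $n\in\mathbb{N}$ and $x\in[0,\infty)$ define $$T_n(f;x)=\frac{1}{e^{\alpha x^2}e_\mu(nx)}\sum_{k=0}^\infty \frac{h_k^\mu(n,\alpha)}{\gamma_\mu(k)}x^k f\!\left(\frac{k+2\mu\theta_k}{n}\right).$$ *)

From Stdlib Require Import Reals Lra Arith Factorial.
From Coquelicot Require Import Coquelicot.
Open Scope R_scope.

(* Pochhammer symbol: poch a k = a (a+1) ... (a+k-1) = Gamma(a+k)/Gamma(a) for a > 0. *)
Fixpoint poch (a : R) (k : nat) : R :=
  match k with
  | O => 1
  | S k' => poch a k' * (a + INR k')
  end.

(* gamma_mu(2m)   = 2^(2m)   m! Gamma(m+mu+1/2)/Gamma(mu+1/2)
   gamma_mu(2m+1) = 2^(2m+1) m! Gamma(m+mu+3/2)/Gamma(mu+1/2) *)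
Definition gamma_mu (mu : R) (k : nat) : R :=
  if Nat.even k
  then 2 ^ k * INR (fact (Nat.div2 k)) * poch (mu + / 2) (Nat.div2 k)
  else 2 ^ k * INR (fact (Nat.div2 k)) * poch (mu + / 2) (S (Nat.div2 k)).

Definition e_mu (mu x : R) : R := Series (fun k => x ^ k / gamma_mu mu k).

Definition theta (k : nat) : R := if Nat.odd k then 1 else 0.

Definition h_poly (mu : R) (k : nat) (xi a : R) : R :=
  gamma_mu mu k *
  sum_f_R0 (fun j => a ^ j * xi ^ (k - 2 * j) / (INR (fact j) * gamma_mu mu (k - 2 * j)))
           (Nat.div2 k).

Definition T_op (alpha mu : R) (n : nat) (f : R -> R) (x : R) : R :=
  / (exp (alpha * x ^ 2) * e_mu mu (INR n * x)) *
  Series (fun k => h_poly mu k (INR n) alpha / gamma_mu mu k * x ^ k *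
                   f ((INR k + 2 * mu * theta k) / INR n)).

Definition is_CB (f : R -> R) : Prop :=
  (exists M, forall x, 0 <= x -> Rabs (f x) <= M) /\
  (forall eps, 0 < eps -> exists delta, 0 < delta /\
     forall x y, 0 <= x -> 0 <= y -> Rabs (x - y) < delta -> Rabs (f x - f y) < eps).

Definition is_deriv_halfline (f g : R -> R) : Prop :=
  forall x, 0 <= x ->
    filterlim (fun y => (f y - f x) / (y - x))
              (within (fun y => 0 <= y /\ y <> x) (locally x)) (locally (g x)).

Definition is_CB2 (h h1 h2 : R -> R) : Prop :=
  is_CB h /\ is_CB h1 /\ is_CB h2 /\
  is_deriv_halfline h h1 /\ is_deriv_halfline h1 h2.

Definition sup_norm (f : R -> R) : R :=
  real (Lub_Rbar (fun r => exists x, 0 <= x /\ r = Rabs (f x))).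

Definition CB2_norm (h h1 h2 : R -> R) : R :=
  sup_norm h + sup_norm h1 + sup_norm h2.

(* T_n is a positive averaging operator: T_n(f;x) = sum_k w_k f(t_k) / sum_k w_k
   with weights w_k = h_k^mu(n,alpha) x^k / gamma_mu(k) >= 0 and nodes
   t_k = (k + 2 mu theta_k)/n.  The weights are the Cauchy product of the
   exponential series of alpha x^2, placed on the even indices, with the series
   of e_mu(n x); so sum_k w_k = exp(alpha x^2) e_mu(n x), and the recurrence
   gamma_mu(k+1) = (k+1 + 2 mu theta_(k+1)) gamma_mu(k) yields the first two
   moments of the nodes in closed form.  The centred moments are exactly
   Delta_1 and Delta_2 times sum_k w_k, and the first-order Taylor bound
   |h(t) - h(x) - h'(x)(t - x)| <= ||h''|| (t - x)^2 (two mean value theorems)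
   gives |T_n(h;x) - h(x)| <= |h'(x)| Delta_1 + ||h''|| Delta_2. *)

From Stdlib Require Import Reals Lra Lia Factorial.
From Coquelicot Require Import Coquelicot.
Open Scope R_scope.

Definition node (mu : R) (k : nat) : R := INR k + 2 * mu * theta k.

Lemma theta_double m : theta (2 * m) = 0.
Proof. unfold theta. now rewrite Nat.odd_mul. Qed.

Lemma theta_succ_double m : theta (S (2 * m)) = 1.
Proof. unfold theta. now rewrite Nat.odd_succ, Nat.even_mul. Qed.

Lemma theta_S k : theta (S k) = 1 - theta k.
Proof.
  unfold theta. rewrite Nat.odd_succ, <- Nat.negb_odd.
  destruct (Nat.odd k); simpl; lra.
Qed.

Lemma theta_0_or_1 k : theta k = 0 \/ theta k = 1.
Proof. unfold theta. destruct (Nat.odd k); auto. Qed.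

Lemma theta_sub_double k j : (2 * j <= k)%nat -> theta (k - 2 * j) = theta k.
Proof.
  intros Hj. unfold theta. replace k with ((k - 2 * j) + 2 * j)%nat at 2 by lia.
  now rewrite Nat.odd_add, Nat.odd_mul, Bool.xorb_false_r.
Qed.

Lemma pow_opp_theta y m : (- y) ^ m = (1 - 2 * theta m) * y ^ m.
Proof.
  induction m as [|m IHm]; [unfold theta; simpl; ring|].
  simpl. rewrite IHm, theta_S. ring.
Qed.

Lemma node_0 mu : node mu 0 = 0.
Proof. unfold node, theta. simpl. ring. Qed.

Lemma node_S mu k : node mu (S k) = node mu k + 1 + 2 * mu - 4 * mu * theta k.
Proof. unfold node. rewrite theta_S, S_INR. ring. Qed.

Lemma node_sub_double mu k j : (2 * j <= k)%nat ->
  node mu k = 2 * INR j + node mu (k - 2 * j).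
Proof.
  intros Hj. unfold node. rewrite theta_sub_double, minus_INR, mult_INR by lia.
  simpl. ring.
Qed.

Lemma gamma_mu_0 mu : gamma_mu mu 0 = 1.
Proof. unfold gamma_mu. simpl. ring. Qed.

Lemma gamma_mu_double mu m :
  gamma_mu mu (2 * m) = 2 ^ (2 * m) * INR (fact m) * poch (mu + / 2) m.
Proof. unfold gamma_mu. now rewrite Nat.even_mul, Nat.div2_double. Qed.

Lemma gamma_mu_succ_double mu m :
  gamma_mu mu (S (2 * m)) = 2 ^ S (2 * m) * INR (fact m) * poch (mu + / 2) (S m).
Proof. unfold gamma_mu. now rewrite Nat.even_succ, Nat.odd_mul, Nat.div2_succ_double. Qed.

Lemma gamma_mu_S mu k : gamma_mu mu (S k) = node mu (S k) * gamma_mu mu k.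
Proof.
  unfold node. destruct (Nat.Even_or_Odd k) as [[m ->] | [m ->]].
  - rewrite gamma_mu_succ_double, gamma_mu_double, theta_succ_double.
    simpl poch. rewrite S_INR, mult_INR, <- tech_pow_Rmult. simpl (INR 2). field.
  - replace (S (2 * m + 1)) with (2 * S m)%nat by lia.
    replace (2 * m + 1)%nat with (S (2 * m)) by lia.
    rewrite gamma_mu_double, gamma_mu_succ_double, theta_double.
    replace (2 * S m)%nat with (S (S (2 * m))) by lia.
    rewrite fact_simpl, mult_INR. simpl poch.
    rewrite !S_INR, mult_INR, <- !tech_pow_Rmult. simpl (INR 2). ring.
Qed.

Section GammaMuBounds.
Variable mu : R.
Hypothesis Hmu : 0 <= mu.

Lemma node_ge_INR k : INR k <= node mu k.
Proof. unfold node. destruct (theta_0_or_1 k) as [-> | ->]; lra. Qed.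

Lemma node_ge0 k : 0 <= node mu k.
Proof. eapply Rle_trans; [apply pos_INR | apply node_ge_INR]. Qed.

Lemma node_S_gt0 k : 0 < node mu (S k).
Proof. apply (Rlt_le_trans _ (INR (S k))); [apply lt_0_INR; lia | apply node_ge_INR]. Qed.

Lemma gamma_mu_ge_fact k : INR (fact k) <= gamma_mu mu k.
Proof.
  induction k as [|k IHk]; [rewrite gamma_mu_0; simpl; lra|].
  rewrite gamma_mu_S, fact_simpl, mult_INR.
  apply Rmult_le_compat; auto using pos_INR, node_ge_INR.
Qed.

Lemma gamma_mu_pos k : 0 < gamma_mu mu k.
Proof.
  eapply Rlt_le_trans; [|apply gamma_mu_ge_fact].
  apply lt_0_INR, lt_O_fact.
Qed.

End GammaMuBounds.

Lemma is_series_ext_R (a b : nat -> R) (l : R) :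
  (forall k, a k = b k) -> is_series a l -> is_series b l.
Proof. apply is_series_ext. Qed.

Lemma is_series_eq_R (a : nat -> R) (l l' : R) : is_series a l -> l = l' -> is_series a l'.
Proof. now intros H <-. Qed.

Lemma is_series_lincomb3 (a b c : nat -> R) (la lb lc A B C : R) :
  is_series a la -> is_series b lb -> is_series c lc ->
  is_series (fun k => A * a k + B * b k + C * c k) (A * la + B * lb + C * lc).
Proof.
  intros Ha Hb Hc.
  apply (is_series_plus (fun k => A * a k + B * b k) (fun k => C * c k)).
  - apply (is_series_plus (fun k => A * a k) (fun k => B * b k)).
    + exact (is_series_scal A a la Ha).
    + exact (is_series_scal B b lb Hb).
  - exact (is_series_scal C c lc Hc).
Qed.

Lemma is_series_shift_scal (a : nat -> R) (l c : R) : is_series a l ->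
  is_series (fun k => match k with O => 0 | S k' => c * a k' end) (c * l).
Proof.
  intros H. apply is_series_decr_1. simpl.
  match goal with |- is_series _ ?L => replace L with (scal c l) end.
  - exact (is_series_scal c a l H).
  - change (c * l = c * l + - 0). ring.
Qed.

Lemma is_series_ge0 (a : nat -> R) (l : R) : (forall k, 0 <= a k) -> is_series a l -> 0 <= l.
Proof.
  intros Ha H.
  apply (is_lim_seq_le (fun _ => 0) (sum_n a) 0 l); [|apply is_lim_seq_const|exact H].
  intros k. rewrite sum_n_Reals. now apply cond_pos_sum.
Qed.

Definition exp_term (z : R) (j : nat) : R := z ^ j / INR (fact j).

Definition e_mu_term (mu y : R) (m : nat) : R := y ^ m / gamma_mu mu m.

Lemma exp_term_ge0 z j : 0 <= z -> 0 <= exp_term z j.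
Proof.
  intros Hz. unfold exp_term. apply Rmult_le_pos; [now apply pow_le|].
  left. apply Rinv_0_lt_compat, lt_0_INR, lt_O_fact.
Qed.

Lemma exp_term_S z j : exp_term z (S j) * INR (S j) = z * exp_term z j.
Proof.
  unfold exp_term. rewrite fact_simpl, mult_INR.
  pose proof (INR_fact_neq_0 j). pose proof (lt_0_INR (S j) (Nat.lt_0_succ j)).
  simpl pow. field. split; lra.
Qed.

Lemma is_series_exp_term z : is_series (exp_term z) (exp z).
Proof.
  eapply is_series_ext_R; [|apply (is_exp_Reals z)].
  intros j. unfold exp_term. now rewrite pow_n_pow.
Qed.

Lemma is_series_INR_exp_term z : is_series (fun j => INR j * exp_term z j) (z * exp z).
Proof.
  eapply is_series_ext_R; [|apply (is_series_shift_scal _ _ z (is_series_exp_term z))].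
  intros [|j]; [simpl; ring|]. rewrite <- exp_term_S. ring.
Qed.

Lemma is_series_INR2_exp_term z :
  is_series (fun j => INR j ^ 2 * exp_term z j) (z * (z * exp z + exp z)).
Proof.
  eapply is_series_eq_R.
  - eapply is_series_ext_R; [|apply (is_series_shift_scal _ _ z
      (is_series_lincomb3 _ _ _ _ _ _ 1 1 0
         (is_series_INR_exp_term z) (is_series_exp_term z) (is_series_exp_term z)))].
    intros [|j]; [simpl; ring|].
    replace (INR (S j) ^ 2 * exp_term z (S j)) with (INR (S j) * (z * exp_term z j))
      by (rewrite <- exp_term_S; ring).
    rewrite S_INR. ring.
  - ring.
Qed.

Section EMuSeries.
Variable mu : R.
Hypothesis Hmu : 0 <= mu.

Lemma e_mu_term_ge0 y m : 0 <= y -> 0 <= e_mu_term mu y m.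
Proof.
  intros Hy. unfold e_mu_term. apply Rmult_le_pos; [now apply pow_le|].
  left. now apply Rinv_0_lt_compat, gamma_mu_pos.
Qed.

Lemma e_mu_term_S y m : node mu (S m) * e_mu_term mu y (S m) = y * e_mu_term mu y m.
Proof.
  unfold e_mu_term. rewrite gamma_mu_S.
  pose proof (node_S_gt0 mu Hmu m). pose proof (gamma_mu_pos mu Hmu m).
  simpl pow. field. split; lra.
Qed.

Lemma is_series_e_mu_term y : is_series (e_mu_term mu y) (e_mu mu y).
Proof.
  apply Series_correct, ex_series_Rabs.
  apply (@ex_series_le R_AbsRing R_CompleteNormedModule _ (exp_term (Rabs y))).
  - intros m. change (Rabs (Rabs (e_mu_term mu y m)) <= exp_term (Rabs y) m).
    rewrite Rabs_Rabsolu. unfold e_mu_term, exp_term, Rdiv.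
    rewrite Rabs_mult, <- RPow_abs.
    apply Rmult_le_compat_l; [apply pow_le, Rabs_pos|].
    pose proof (gamma_mu_pos mu Hmu m).
    rewrite Rabs_inv, Rabs_pos_eq by lra.
    apply Rinv_le_contravar; [apply lt_0_INR, lt_O_fact | now apply gamma_mu_ge_fact].
  - eexists. apply is_series_exp_term.
Qed.

Lemma is_series_node_e_mu_term y :
  is_series (fun m => node mu m * e_mu_term mu y m) (y * e_mu mu y).
Proof.
  eapply is_series_ext_R; [|apply (is_series_shift_scal _ _ y (is_series_e_mu_term y))].
  intros [|m]; [rewrite node_0; ring|]. now rewrite e_mu_term_S.
Qed.

Lemma is_series_theta_e_mu_term y :
  is_series (fun m => theta m * e_mu_term mu y m) ((e_mu mu y - e_mu mu (- y)) / 2).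
Proof.
  eapply is_series_eq_R.
  - eapply is_series_ext_R; [|apply (is_series_lincomb3 _ _ _ _ _ _ (/ 2) (- / 2) 0
      (is_series_e_mu_term y) (is_series_e_mu_term (- y)) (is_series_e_mu_term y))].
    intros m. unfold e_mu_term. rewrite pow_opp_theta.
    pose proof (gamma_mu_pos mu Hmu m).
    destruct (theta_0_or_1 m) as [-> | ->]; field; lra.
  - field.
Qed.

Lemma is_series_node2_e_mu_term y :
  is_series (fun m => node mu m ^ 2 * e_mu_term mu y m)
    (y * (y * e_mu mu y + e_mu mu y + 2 * mu * e_mu mu (- y))).
Proof.
  eapply is_series_eq_R.
  - eapply is_series_ext_R; [|apply (is_series_shift_scal _ _ y
      (is_series_lincomb3 _ _ _ _ _ _ 1 (1 + 2 * mu) (- 4 * mu)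
         (is_series_node_e_mu_term y) (is_series_e_mu_term y) (is_series_theta_e_mu_term y)))].
    intros [|m]; [rewrite node_0; ring|].
    replace (node mu (S m) ^ 2 * e_mu_term mu y (S m))
      with (node mu (S m) * (y * e_mu_term mu y m)) by (rewrite <- e_mu_term_S; ring).
    rewrite node_S. ring.
  - field.
Qed.

Lemma e_mu_ge1 y : 0 <= y -> 1 <= e_mu mu y.
Proof.
  intros Hy.
  assert (Htail : is_series (fun m => e_mu_term mu y (S m)) (e_mu mu y - 1)).
  { apply is_series_incr_1.
    match goal with |- is_series _ ?L => replace L with (e_mu mu y) end.
    - apply is_series_e_mu_term.
    - unfold e_mu_term. rewrite gamma_mu_0.
      change (e_mu mu y = e_mu mu y - 1 + 1 / 1). field. }
  apply is_series_ge0 in Htail; [lra|]. intros m. now apply e_mu_term_ge0.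
Qed.

End EMuSeries.

Definition even_spread (e : nat -> R) (i : nat) : R :=
  if Nat.even i then e (Nat.div2 i) else 0.

Lemma sum_f_R0_even_spread e g N :
  sum_f_R0 (fun i => even_spread e i * g i) N =
  sum_f_R0 (fun j => e j * g (2 * j)%nat) (Nat.div2 N).
Proof.
  induction N as [|N IHN]; [reflexivity|].
  simpl sum_f_R0 at 1. rewrite IHN. unfold even_spread at 1.
  destruct (Nat.Even_or_Odd N) as [[m ->] | [m ->]].
  - rewrite Nat.even_succ, Nat.odd_mul, Nat.div2_succ_double, Nat.div2_double. simpl. ring.
  - replace (S (2 * m + 1)) with (2 * S m)%nat by lia.
    replace (2 * m + 1)%nat with (S (2 * m)) by lia.
    rewrite Nat.even_mul, Nat.div2_succ_double, Nat.div2_double. reflexivity.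
Qed.

Lemma double_le_of_le_div2 j k : (j <= Nat.div2 k)%nat -> (2 * j <= k)%nat.
Proof. pose proof (Nat.div2_odd k). destruct (Nat.odd k); simpl in *; lia. Qed.

Lemma filterlim_div2 : filterlim Nat.div2 eventually eventually.
Proof.
  intros P [N HN]. exists (2 * N)%nat. intros k Hk. apply HN.
  pose proof (Nat.div2_odd k). destruct (Nat.odd k); simpl in *; lia.
Qed.

Lemma is_series_even_spread e l : is_series e l -> is_series (even_spread e) l.
Proof.
  intros H. unfold is_series in *.
  apply (filterlim_ext (fun N => sum_n e (Nat.div2 N))).
  - intros N. rewrite !sum_n_Reals.
    pose proof (sum_f_R0_even_spread e (fun _ => 1) N) as E.
    rewrite (sum_eq _ (even_spread e) _ (fun i _ => Rmult_1_r _)) in E.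
    rewrite (sum_eq _ e _ (fun i _ => Rmult_1_r _)) in E.
    now rewrite E.
  - eapply filterlim_comp; [apply filterlim_div2 | exact H].
Qed.

Lemma is_series_mult_pos_even (e b : nat -> R) (le lb : R) :
  (forall j, 0 <= e j) -> (forall m, 0 <= b m) ->
  is_series e le -> is_series b lb ->
  is_series (fun k => sum_f_R0 (fun j => e j * b (k - 2 * j)%nat) (Nat.div2 k)) (le * lb).
Proof.
  intros He Hb Hse Hsb.
  eapply is_series_ext_R;
    [|apply (is_series_mult_pos _ _ _ _ (is_series_even_spread e le Hse) Hsb)].
  - intros k. apply (sum_f_R0_even_spread e (fun i => b (k - i)%nat)).
  - intros i. unfold even_spread. destruct (Nat.even i); [apply He | lra].
  - exact Hb.
Qed.

Lemma sum_f_R0_lincomb3 f g h A B C N :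
  A * sum_f_R0 f N + B * sum_f_R0 g N + C * sum_f_R0 h N =
  sum_f_R0 (fun i => A * f i + B * g i + C * h i) N.
Proof. induction N as [|N IHN]; simpl; [ring|]. rewrite <- IHN. ring. Qed.

Definition T_weight (alpha mu : R) (n : nat) (x : R) (k : nat) : R :=
  h_poly mu k (INR n) alpha / gamma_mu mu k * x ^ k.

Section OperatorMoments.
Variables (alpha mu : R) (n : nat) (x : R).
Hypotheses (Halpha : 0 <= alpha) (Hmu : 0 <= mu) (Hx : 0 <= x).

Let z := alpha * x ^ 2.
Let y := INR n * x.

Let z_ge0 : 0 <= z.
Proof. unfold z. apply Rmult_le_pos; [exact Halpha | now apply pow_le]. Qed.

Let y_ge0 : 0 <= y.
Proof. unfold y. apply Rmult_le_pos; [apply pos_INR | exact Hx]. Qed.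

Lemma T_weight_cauchy k :
  T_weight alpha mu n x k =
  sum_f_R0 (fun j => exp_term z j * e_mu_term mu y (k - 2 * j)) (Nat.div2 k).
Proof.
  unfold T_weight, h_poly. pose proof (gamma_mu_pos mu Hmu k).
  set (S := sum_f_R0 _ (Nat.div2 k)).
  replace (gamma_mu mu k * S / gamma_mu mu k) with S by (field; lra).
  unfold S. rewrite Rmult_comm, scal_sum. apply sum_eq. intros j Hj.
  apply double_le_of_le_div2 in Hj.
  unfold exp_term, e_mu_term, z, y.
  pose proof (gamma_mu_pos mu Hmu (k - 2 * j)). pose proof (INR_fact_neq_0 j).
  replace (x ^ k) with ((x ^ 2) ^ j * x ^ (k - 2 * j))
    by (rewrite <- pow_mult, <- pow_add; f_equal; lia).
  rewrite !Rpow_mult_distr. field. lra.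
Qed.

Lemma T_weight_ge0 k : 0 <= T_weight alpha mu n x k.
Proof.
  rewrite T_weight_cauchy. apply cond_pos_sum. intros j.
  apply Rmult_le_pos; [apply exp_term_ge0, z_ge0 | apply e_mu_term_ge0, y_ge0; exact Hmu].
Qed.

Lemma T_normalizer_pos : 0 < exp z * e_mu mu y.
Proof.
  apply Rmult_lt_0_compat; [apply exp_pos|].
  apply (Rlt_le_trans _ 1); [lra | exact (e_mu_ge1 mu Hmu y y_ge0)].
Qed.

Lemma is_series_T_weight : is_series (T_weight alpha mu n x) (exp z * e_mu mu y).
Proof.
  eapply is_series_ext_R; [|apply (is_series_mult_pos_even _ _ _ _
    (fun j => exp_term_ge0 z j z_ge0) (fun m => e_mu_term_ge0 mu Hmu y m y_ge0)
    (is_series_exp_term z) (is_series_e_mu_term mu Hmu y))].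
  intros k. now rewrite T_weight_cauchy.
Qed.

Lemma is_series_T_weight_node :
  is_series (fun k => T_weight alpha mu n x k * node mu k)
    (2 * z * exp z * e_mu mu y + exp z * y * e_mu mu y).
Proof.
  pose proof (fun j => Rmult_le_pos _ _ (pos_INR j) (exp_term_ge0 z j z_ge0)) as HE1.
  pose proof (fun m => Rmult_le_pos _ _ (node_ge0 mu Hmu m) (e_mu_term_ge0 mu Hmu y m y_ge0))
    as HQ1.
  pose proof (is_series_mult_pos_even _ _ _ _ HE1 (fun m => e_mu_term_ge0 mu Hmu y m y_ge0)
    (is_series_INR_exp_term z) (is_series_e_mu_term mu Hmu y)) as S1.
  pose proof (is_series_mult_pos_even _ _ _ _ (fun j => exp_term_ge0 z j z_ge0) HQ1
    (is_series_exp_term z) (is_series_node_e_mu_term mu Hmu y)) as S2.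
  eapply is_series_eq_R; [eapply is_series_ext_R;
    [|apply (is_series_lincomb3 _ _ _ _ _ _ 2 1 0 S1 S2 S1)]|ring].
  intros k. rewrite T_weight_cauchy, sum_f_R0_lincomb3, (Rmult_comm _ (node mu k)), scal_sum.
  apply sum_eq. intros j Hj. apply double_le_of_le_div2 in Hj.
  rewrite (node_sub_double mu k j Hj). ring.
Qed.

Lemma is_series_T_weight_node2 :
  is_series (fun k => T_weight alpha mu n x k * node mu k ^ 2)
    (4 * z * (z + 1) * exp z * e_mu mu y + 4 * z * exp z * y * e_mu mu y
     + exp z * y * (y * e_mu mu y + e_mu mu y + 2 * mu * e_mu mu (- y))).
Proof.
  pose proof (fun j => Rmult_le_pos _ _ (pos_INR j) (exp_term_ge0 z j z_ge0)) as HE1.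
  pose proof (fun j => Rmult_le_pos _ _ (pow_le _ 2 (pos_INR j)) (exp_term_ge0 z j z_ge0)) as HE2.
  pose proof (fun m => Rmult_le_pos _ _ (node_ge0 mu Hmu m) (e_mu_term_ge0 mu Hmu y m y_ge0))
    as HQ1.
  pose proof (fun m => Rmult_le_pos _ _ (pow_le _ 2 (node_ge0 mu Hmu m))
    (e_mu_term_ge0 mu Hmu y m y_ge0)) as HQ2.
  pose proof (is_series_mult_pos_even _ _ _ _ HE2 (fun m => e_mu_term_ge0 mu Hmu y m y_ge0)
    (is_series_INR2_exp_term z) (is_series_e_mu_term mu Hmu y)) as S1.
  pose proof (is_series_mult_pos_even _ _ _ _ HE1 HQ1
    (is_series_INR_exp_term z) (is_series_node_e_mu_term mu Hmu y)) as S2.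
  pose proof (is_series_mult_pos_even _ _ _ _ (fun j => exp_term_ge0 z j z_ge0) HQ2
    (is_series_exp_term z) (is_series_node2_e_mu_term mu Hmu y)) as S3.
  eapply is_series_eq_R; [eapply is_series_ext_R;
    [|apply (is_series_lincomb3 _ _ _ _ _ _ 4 4 1 S1 S2 S3)]|ring].
  intros k. rewrite T_weight_cauchy, sum_f_R0_lincomb3, (Rmult_comm _ (node mu k ^ 2)), scal_sum.
  apply sum_eq. intros j Hj. apply double_le_of_le_div2 in Hj.
  rewrite (node_sub_double mu k j Hj). ring.
Qed.

Hypothesis Hn : (0 < n)%nat.

Lemma is_series_T_weight_central_moment1 :
  is_series (fun k => T_weight alpha mu n x k * (node mu k / INR n - x))
    (exp z * e_mu mu y * (2 * alpha * x ^ 2 / INR n)).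
Proof.
  pose proof (lt_0_INR n Hn).
  eapply is_series_eq_R; [eapply is_series_ext_R; [|apply (is_series_lincomb3 _ _ _ _ _ _
    (/ INR n) (- x) 0 is_series_T_weight_node is_series_T_weight is_series_T_weight)]|].
  - intros k. cbv beta. field. lra.
  - unfold z, y. field. lra.
Qed.

Lemma is_series_T_weight_central_moment2 :
  is_series (fun k => T_weight alpha mu n x k * (node mu k / INR n - x) ^ 2)
    (exp z * e_mu mu y *
      (/ INR n ^ 2 * x * (4 * x ^ 3 * alpha ^ 2 + 4 * alpha * x + INR n)
       + 2 * mu * x / INR n * (e_mu mu (- y) / e_mu mu y))).
Proof.
  pose proof (lt_0_INR n Hn). pose proof (e_mu_ge1 mu Hmu y y_ge0).
  eapply is_series_eq_R; [eapply is_series_ext_R; [|apply (is_series_lincomb3 _ _ _ _ _ _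
    (/ INR n ^ 2) (-2 * x / INR n) (x ^ 2)
    is_series_T_weight_node2 is_series_T_weight_node is_series_T_weight)]|].
  - intros k. cbv beta. field. lra.
  - unfold z, y in *. field. split; lra.
Qed.

End OperatorMoments.

Lemma sup_norm_ub f : is_CB f -> forall t, 0 <= t -> Rabs (f t) <= sup_norm f.
Proof.
  intros [[M HM] _] t Ht. unfold sup_norm.
  set (E := fun r => exists s, 0 <= s /\ r = Rabs (f s)).
  destruct (Lub_Rbar_correct E) as [Hub Hlub].
  assert (HM' : Rbar_le (Lub_Rbar E) M).
  { apply Hlub. intros r [s [Hs ->]]. now apply HM. }
  assert (Ht' := Hub (Rabs (f t)) (ex_intro _ t (conj Ht eq_refl))).
  destruct (Lub_Rbar E); simpl in *; tauto.
Qed.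

Lemma sup_norm_ge0 f : is_CB f -> 0 <= sup_norm f.
Proof.
  intros Hf. apply (Rle_trans _ (Rabs (f 0))); [apply Rabs_pos | apply (sup_norm_ub f Hf); lra].
Qed.

(* Extending [f] by the constant [f 0] to the left turns the one-sided
   derivative on [0,oo) into Coquelicot's two-sided one at interior points. *)
Lemma is_derive_extend f f' c : is_deriv_halfline f f' -> 0 < c ->
  is_derive (fun t => f (Rmax t 0)) c (f' c).
Proof.
  intros Hd Hc. apply is_derive_Reals. intros eps Heps.
  destruct (Hd c (Rlt_le _ _ Hc) _ (locally_ball (f' c) (mkposreal eps Heps))) as [del Hdel].
  assert (Hm : 0 < Rmin del c) by (apply Rmin_pos; [apply cond_pos | lra]).
  exists (mkposreal _ Hm). intros dh Hdh0 Hdh. simpl in Hdh.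
  assert (Hdel' : Rabs dh < del) by (eapply Rlt_le_trans; [exact Hdh | apply Rmin_l]).
  assert (Hc' : Rabs dh < c) by (eapply Rlt_le_trans; [exact Hdh | apply Rmin_r]).
  assert (Hpos : 0 < c + dh) by (apply Rabs_def2 in Hc'; lra).
  rewrite (Rmax_left (c + dh) 0), (Rmax_left c 0) by lra.
  assert (Hball : ball c del (c + dh))
    by (change (Rabs (c + dh - c) < del); now replace (c + dh - c) with dh by ring).
  assert (Hne : c + dh <> c) by (intros E; apply Hdh0; lra).
  assert (Hq := Hdel (c + dh) Hball (conj (Rlt_le _ _ Hpos) Hne)).
  replace (c + dh - c) with dh in Hq by ring. exact Hq.
Qed.

Lemma continuity_pt_extend f c : is_CB f -> continuity_pt (fun t => f (Rmax t 0)) c.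
Proof.
  intros [_ Huc] eps Heps. destruct (Huc eps Heps) as [d [Hd Hfd]].
  exists d. split; [lra|]. intros t [_ Ht]. simpl in *. unfold R_dist in *.
  apply Hfd; [apply Rmax_r | apply Rmax_r |].
  eapply Rle_lt_trans; [|exact Ht].
  unfold Rmax. destruct (Rle_dec t 0), (Rle_dec c 0); unfold Rabs;
    repeat destruct Rcase_abs; lra.
Qed.

Lemma MVT_halfline f f' a b : is_CB f -> is_deriv_halfline f f' -> 0 <= a -> 0 <= b ->
  exists c, Rmin a b <= c <= Rmax a b /\ f b - f a = f' c * (b - a).
Proof.
  intros Hf Hd Ha Hb.
  assert (Hmin : 0 <= Rmin a b) by (now apply Rmin_glb).
  destruct (MVT_gen (fun t => f (Rmax t 0)) a b f') as [c [Hc E]].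
  - intros t Ht. apply is_derive_extend; [exact Hd | lra].
  - intros t _. now apply continuity_pt_extend.
  - exists c. split; [exact Hc|].
    now rewrite (Rmax_left a 0), (Rmax_left b 0) in E by lra.
Qed.

Lemma taylor_remainder_halfline h h1 h2 C x t :
  is_CB h -> is_deriv_halfline h h1 -> is_CB h1 -> is_deriv_halfline h1 h2 ->
  (forall s, 0 <= s -> Rabs (h2 s) <= C) -> 0 <= x -> 0 <= t ->
  Rabs (h t - h x - h1 x * (t - x)) <= C * (t - x) ^ 2.
Proof.
  intros Hh Hd Hh1 Hd1 HC Hx Ht.
  destruct (MVT_halfline h h1 x t Hh Hd Hx Ht) as [c [Hc Ec]].
  assert (Hc0 : 0 <= c) by (eapply Rle_trans; [apply Rmin_glb|]; [exact Hx | exact Ht | apply Hc]).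
  destruct (MVT_halfline h1 h2 x c Hh1 Hd1 Hx Hc0) as [d [Hd' Ed]].
  assert (Hd0 : 0 <= d) by (eapply Rle_trans; [apply Rmin_glb|]; [exact Hx | exact Hc0 | apply Hd']).
  assert (Hcx : Rabs (c - x) <= Rabs (t - x)).
  { unfold Rmin, Rmax in Hc. destruct (Rle_dec x t); unfold Rabs;
      repeat destruct Rcase_abs; lra. }
  replace (h t - h x - h1 x * (t - x)) with (h2 d * (c - x) * (t - x)) by (rewrite <- Ed; lra).
  rewrite !Rabs_mult, <- pow2_abs, <- Rsqr_pow2. unfold Rsqr. rewrite <- Rmult_assoc.
  apply Rmult_le_compat_r; [apply Rabs_pos|].
  apply Rmult_le_compat; [apply Rabs_pos | apply Rabs_pos | now apply HC | exact Hcx].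
Qed.

Lemma positive_series_taylor_estimate (A t : nat -> R) (f f1 : R -> R) (x S D1 D2 C : R) :
  (forall k, 0 <= A k) -> 0 < S ->
  is_series A S ->
  is_series (fun k => A k * (t k - x)) (S * D1) ->
  is_series (fun k => A k * (t k - x) ^ 2) (S * D2) ->
  (forall k, Rabs (f (t k) - f x - f1 x * (t k - x)) <= C * (t k - x) ^ 2) ->
  Rabs (/ S * Series (fun k => A k * f (t k)) - f x) <= Rabs (f1 x * D1) + C * D2.
Proof.
  intros HA HS HS0 HS1 HS2 Htaylor.
  set (rem := fun k => f (t k) - f x - f1 x * (t k - x)).
  assert (HCS2 : is_series (fun k => C * (A k * (t k - x) ^ 2)) (C * (S * D2)))
    by exact (is_series_scal C _ _ HS2).
  assert (Hrem : forall k, Rabs (A k * rem k) <= C * (A k * (t k - x) ^ 2)).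
  { intros k. rewrite Rabs_mult, (Rabs_pos_eq _ (HA k)).
    replace (C * (A k * (t k - x) ^ 2)) with (A k * (C * (t k - x) ^ 2)) by ring.
    apply Rmult_le_compat_l; [apply HA | apply Htaylor]. }
  assert (Habs : ex_series (fun k => Rabs (A k * rem k))).
  { apply (@ex_series_le R_AbsRing R_CompleteNormedModule _
      (fun k => C * (A k * (t k - x) ^ 2))); [|eexists; exact HCS2].
    intros k. change (Rabs (Rabs (A k * rem k)) <= C * (A k * (t k - x) ^ 2)).
    rewrite Rabs_Rabsolu. apply Hrem. }
  set (SR := Series (fun k => A k * rem k)).
  assert (HSR : Rabs SR <= C * (S * D2)).
  { eapply Rle_trans; [apply Series_Rabs, Habs|].
    rewrite <- (is_series_unique _ _ HCS2).
    apply Series_le; [intros k; split; [apply Rabs_pos | apply Hrem] | eexists; exact HCS2]. }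
  assert (Hsum : is_series (fun k => A k * f (t k)) (f x * S + f1 x * (S * D1) + 1 * SR)).
  { eapply is_series_ext_R; [|apply (is_series_lincomb3 _ _ _ _ _ _ (f x) (f1 x) 1
      HS0 HS1 (Series_correct _ (ex_series_Rabs _ Habs)))].
    intros k. unfold rem. ring. }
  rewrite (is_series_unique _ _ Hsum).
  replace (/ S * (f x * S + f1 x * (S * D1) + 1 * SR) - f x) with (f1 x * D1 + SR / S)
    by (field; lra).
  eapply Rle_trans; [apply Rabs_triang|]. apply Rplus_le_compat_l.
  unfold Rdiv. rewrite Rabs_mult, Rabs_inv, (Rabs_pos_eq S) by lra.
  apply (Rmult_le_reg_r S); [exact HS|].
  rewrite Rmult_assoc, Rinv_l by lra. lra.
Qed.

Theorem lemma8 (alpha mu : R) (Halpha : 0 <= alpha) (Hmu : 0 <= mu)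
  (h h1 h2 : R -> R) (Hh : is_CB2 h h1 h2) (n : nat) (Hn : (0 < n)%nat)
  (x : R) (Hx : 0 <= x) :
  Rabs (T_op alpha mu n h x - h x) <=
    (2 * alpha * x ^ 2 / INR n
     + (/ INR n ^ 2 * x * (4 * x ^ 3 * alpha ^ 2 + 4 * alpha * x + INR n)
        + 2 * mu * x / INR n * (e_mu mu (- (INR n * x)) / e_mu mu (INR n * x))))
    * CB2_norm h h1 h2.
Proof.
  destruct Hh as (Hh0 & Hh1 & Hh2 & Hd & Hd1).
  pose proof (lt_0_INR n Hn) as HnR.
  pose proof (T_normalizer_pos alpha mu n x Hmu Hx) as HS.
  pose proof (is_series_T_weight_central_moment2 alpha mu n x Halpha Hmu Hx Hn) as HM2.
  set (D1 := 2 * alpha * x ^ 2 / INR n) in *.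
  set (D2 := _ + 2 * mu * x / INR n * _) in *.
  set (S := exp (alpha * x ^ 2) * e_mu mu (INR n * x)) in *.
  assert (HD1 : 0 <= D1).
  { unfold D1, Rdiv. apply Rmult_le_pos; [|left; now apply Rinv_0_lt_compat].
    apply Rmult_le_pos; [lra | now apply pow_le]. }
  assert (HD2 : 0 <= D2).
  { apply (Rmult_le_reg_l S); [exact HS|]. rewrite Rmult_0_r.
    refine (is_series_ge0 _ _ _ HM2). intros k.
    apply Rmult_le_pos; [now apply T_weight_ge0 | apply pow2_ge_0]. }
  assert (Hest : Rabs (T_op alpha mu n h x - h x) <= Rabs (h1 x * D1) + sup_norm h2 * D2).
  { apply (positive_series_taylor_estimate (T_weight alpha mu n x) (fun k => node mu k / INR n));
      auto using T_weight_ge0, is_series_T_weight, is_series_T_weight_central_moment1.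
    intros k. apply (taylor_remainder_halfline h h1 h2); auto using sup_norm_ub.
    apply Rmult_le_pos; [now apply node_ge0 | left; now apply Rinv_0_lt_compat]. }
  pose proof (sup_norm_ge0 h Hh0). pose proof (sup_norm_ge0 h2 Hh2).
  pose proof (sup_norm_ub h1 Hh1 x Hx). pose proof (Rabs_pos (h1 x)).
  rewrite Rabs_mult, (Rabs_pos_eq D1 HD1) in Hest.
  unfold CB2_norm. clearbody D1 D2 S. nra.
Qed.
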